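(* Let $\pi:D\to M$ be a homomorphism from a discrete semigroup $D$ to a Hausdorff topological semigroup $M$, and let $S=D\cup_\pi M$ (a semitopological semigroup). The following are equivalent: (1) $S$ is a topological semigroup (multiplication jointly continuous); (2) for each $c\in D$ the set $D_c=\{(x,y)\in D\times D:xy=c\}$ is closed in $S\times S$. If moreover $\pi$ is finitely resolvable, then (1) and (2) are equivalent to (3) for each $c\in D$ the set $\pi^2(D_c)=\{(\pi(x),\pi(y)):(x,y)\in D_c\}$ is closed and discrete in $M\times M$, and they are implied by (4) the subspace $\pi(D)$ is discrete in $M$ and $M\setminus\pi(D)$ is a two-sided ideal in $M$.
   Context: For a discrete space $D$: if $D$ is infinite, $\alpha D=D\cup\{\infty\}$ is its one-point compactification; if $D$ is finite, $\alpha D$ is the topological sum of $D$ and an isolated point $\infty\notin D$. For a map $\pi:D\to M$, $D\cup_\pi M$ is the subspace $\{(x,\pi(x)):x\in D\}\cup(\{\infty\}\times M)$ of $\alpha D\times M$, with $D$ identified with $\{(x,\pi(x))\}$ and $M$ with $\{\infty\}\times M$. When $D$ is a semigroup, $M$ a semitopological semigroup and $\pi$ a homomorphism, $D\cup_\pi M$ carries the semigroup operation extending those of $D$ and $M$ by $xy=\pi(x)y$ for $x\in D,y\in M$ and $xy=x\pi(y)$ for $x\in M,y\in D$; this makes it a semitopological semigroup (separately continuous multiplication). The homomorphism $\pi$ is finitely resolvable if for all $a,b\in M$ and $c\in D$ the set $\{(x,y)\in D\times D:\pi(x)=a,\ \pi(y)=b,\ xy=c\}$ is finite. *)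

From Stdlib Require Import List.
Set Implicit Arguments.

Definition is_topology (X : Type) (op : (X -> Prop) -> Prop) : Prop :=
  op (fun _ => True) /\
  (forall U V, op U -> op V -> op (fun x => U x /\ V x)) /\
  (forall F : (X -> Prop) -> Prop, (forall U, F U -> op U) ->
     op (fun x => exists U, F U /\ U x)).

Definition closed (X : Type) (op : (X -> Prop) -> Prop) (A : X -> Prop) : Prop :=
  op (fun x => ~ A x).

Definition continuous (X Y : Type) (opX : (X -> Prop) -> Prop)
  (opY : (Y -> Prop) -> Prop) (f : X -> Y) : Prop :=
  forall V, opY V -> opX (fun x => V (f x)).

Definition hausdorff (X : Type) (op : (X -> Prop) -> Prop) : Prop :=
  forall a b : X, a <> b -> exists U V, op U /\ op V /\ U a /\ V b /\
     (forall x, U x -> V x -> False).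

Definition discrete_in (X : Type) (op : (X -> Prop) -> Prop) (A : X -> Prop) : Prop :=
  forall a, A a -> exists U, op U /\ U a /\ (forall b, A b -> U b -> b = a).

Definition prod_open (X Y : Type) (opX : (X -> Prop) -> Prop)
  (opY : (Y -> Prop) -> Prop) (W : X * Y -> Prop) : Prop :=
  forall p, W p -> exists U V, opX U /\ opY V /\ U (fst p) /\ V (snd p) /\
     (forall q, U (fst q) -> V (snd q) -> W q).

Definition induced (S X : Type) (op : (X -> Prop) -> Prop) (e : S -> X)
  (W : S -> Prop) : Prop :=
  exists V, op V /\ (forall s, W s <-> V (e s)).

Definition finite_set (X : Type) (A : X -> Prop) : Prop :=
  exists l : list X, forall x, A x -> In x l.

(* alpha D for a discrete D, carrier option D with None = infinity.
   For D infinite this is the one-point compactification; for D finite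
   every set is open, i.e. the topological sum of D and an isolated point. *)
Definition alpha_open (D : Type) (U : option D -> Prop) : Prop :=
  U None -> finite_set (fun x : D => ~ U (Some x)).

Definition associative (X : Type) (m : X -> X -> X) : Prop :=
  forall x y z, m (m x y) z = m x (m y z).

Definition homomorphism (D M : Type) (mD : D -> D -> D) (mM : M -> M -> M)
  (pi : D -> M) : Prop := forall x y, pi (mD x y) = mM (pi x) (pi y).

(* The space D \cup_pi M: carrier D + M, embedded in alpha D x M. *)
Definition glue_emb (D M : Type) (pi : D -> M) (s : D + M) : option D * M :=
  match s with
  | inl x => (Some x, pi x)
  | inr m => (None, m)
  end.

Definition glue_open (D M : Type) (opM : (M -> Prop) -> Prop) (pi : D -> M) :
  (D + M -> Prop) -> Prop :=
  induced (prod_open (@alpha_open D) opM) (glue_emb pi).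

Definition glue_mul (D M : Type) (mD : D -> D -> D) (mM : M -> M -> M)
  (pi : D -> M) (s t : D + M) : D + M :=
  match s, t with
  | inl x, inl y => inl (mD x y)
  | inl x, inr b => inr (mM (pi x) b)
  | inr a, inl y => inr (mM a (pi y))
  | inr a, inr b => inr (mM a b)
  end.

Definition finitely_resolvable (D M : Type) (mD : D -> D -> D) (pi : D -> M) : Prop :=
  forall (a b : M) (c : D),
    finite_set (fun p : D * D => pi (fst p) = a /\ pi (snd p) = b /\ mD (fst p) (snd p) = c).

Definition two_sided_ideal (M : Type) (mM : M -> M -> M) (I : M -> Prop) : Prop :=
  forall a b, I a -> I (mM a b) /\ I (mM b a).

(* The proof is organised around two
   local notions at a point q of M x M:
   - the fibre over c is locally finite at q: some neighbourhood N of q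
     has only finitely many (x,y) in D_c with pi^2(x,y) in N;
   - q is not an accumulation point of pi^2(D_c): some neighbourhood of q
     meets pi^2(D_c) in at most the point q itself.
   (1) <-> (2): multiplication of S is continuous exactly when each D_c is
   closed.  D_c is the preimage of the closed point c, and conversely near a
   pair whose product lies in M, closedness of finitely many D_c keeps the
   product away from the finitely many excluded points of D.
   (2) <-> local finiteness everywhere, by reading off basic neighbourhoods
   of S.  Local finiteness implies non-accumulation since M is Hausdorff,
   and the converse holds when pi is finitely resolvable; non-accumulation
   everywhere is exactly (3).  Finally (4) implies non-accumulation
   everywhere, using the ideal property and the continuity of M. *)

From Stdlib Require Import List Classical.
Set Implicit Arguments.
Unset Strict Implicit.

Definition nbhd (X : Type) (op : (X -> Prop) -> Prop) (x : X) (N : X -> Prop) : Prop :=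
  exists U, op U /\ U x /\ forall y, U y -> N y.

Section Neighbourhoods.
Variables (X : Type) (op : (X -> Prop) -> Prop).
Hypothesis Htop : is_topology op.

Lemma nbhd_open (U : X -> Prop) x : op U -> U x -> nbhd op x U.
Proof. intros HU Hx. exists U. auto. Qed.

Lemma nbhd_point x N : nbhd op x N -> N x.
Proof. intros [U [_ [Hx HN]]]. auto. Qed.

Lemma nbhd_mono x (N N' : X -> Prop) :
  nbhd op x N -> (forall y, N y -> N' y) -> nbhd op x N'.
Proof. intros [U [HU [Hx HN]]] Hsub. exists U. auto. Qed.

Lemma nbhd_full x : nbhd op x (fun _ => True).
Proof. destruct Htop as [Hfull _]. exists (fun _ => True). auto. Qed.

Lemma nbhd_inter x N1 N2 :
  nbhd op x N1 -> nbhd op x N2 -> nbhd op x (fun y => N1 y /\ N2 y).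
Proof.
  destruct Htop as [_ [Hinter _]].
  intros [U1 [HU1 [Hx1 H1]]] [U2 [HU2 [Hx2 H2]]].
  exists (fun y => U1 y /\ U2 y). split; [apply Hinter; assumption|].
  split; [auto | intros y [Hy1 Hy2]; auto].
Qed.

Lemma nbhd_list_choice (I : Type) (P : I -> (X -> Prop) -> Prop) (l : list I) x :
  (forall i N N', P i N -> (forall y, N' y -> N y) -> P i N') ->
  (forall i, In i l -> exists N, nbhd op x N /\ P i N) ->
  exists N, nbhd op x N /\ forall i, In i l -> P i N.
Proof.
  intros Hanti. induction l as [|i l IH]; intros Hl.
  - exists (fun _ => True). split; [apply nbhd_full | intros i []].
  - destruct (Hl i (or_introl eq_refl)) as [N1 [HN1 HP1]].
    destruct IH as [N2 [HN2 HP2]]; [intros j Hj; apply Hl; right; exact Hj|].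
    exists (fun y => N1 y /\ N2 y). split; [apply nbhd_inter; assumption|].
    intros j [<-|Hj]; eapply Hanti; eauto; intros y [? ?]; assumption.
Qed.

Lemma nbhd_of_closed (A : X -> Prop) x :
  closed op A -> ~ A x -> nbhd op x (fun y => ~ A y).
Proof. intros HA Hx. apply nbhd_open; assumption. Qed.

Lemma hausdorff_nbhd a b :
  hausdorff op -> a <> b -> exists N, nbhd op a N /\ ~ N b.
Proof.
  intros Hh Hab. destruct (Hh a b Hab) as [U [V [HU [HV [Ha [Hb Hdisj]]]]]].
  exists U. split; [apply nbhd_open; assumption | intro HUb; exact (Hdisj b HUb Hb)].
Qed.

End Neighbourhoods.

Lemma nbhd_continuous (X Y : Type) (opX : (X -> Prop) -> Prop) (opY : (Y -> Prop) -> Prop)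
  (f : X -> Y) x N :
  continuous opX opY f -> nbhd opY (f x) N -> nbhd opX x (fun y => N (f y)).
Proof.
  intros Hf [U [HU [Hx HN]]]. exists (fun y => U (f y)). split; [apply Hf; exact HU|].
  split; [exact Hx | intros y Hy; apply HN; exact Hy].
Qed.

Lemma alpha_topology (D : Type) : is_topology (@alpha_open D).
Proof.
  split; [|split].
  - intros _. exists nil. intros x Hx. exfalso. apply Hx. exact I.
  - intros U V HU HV [HUn HVn].
    destruct (HU HUn) as [l1 H1], (HV HVn) as [l2 H2].
    exists (l1 ++ l2). intros x Hx. apply in_or_app.
    destruct (classic (U (Some x))) as [HUx|HUx].
    + right. apply H2. intro HVx. apply Hx. split; assumption.
    + left. apply H1. exact HUx.
  - intros F HF [U [HFU HUn]]. destruct (HF U HFU HUn) as [l Hl].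
    exists l. intros x Hx. apply Hl. intro HUx. apply Hx. exists U. auto.
Qed.

Lemma prod_topology (X Y : Type) (opX : (X -> Prop) -> Prop) (opY : (Y -> Prop) -> Prop) :
  is_topology opX -> is_topology opY -> is_topology (prod_open opX opY).
Proof.
  intros [HX1 [HX2 _]] [HY1 [HY2 _]]. split; [|split].
  - intros p _. exists (fun _ => True), (fun _ => True). auto.
  - intros W1 W2 HW1 HW2 p [Hp1 Hp2].
    destruct (HW1 p Hp1) as [U1 [V1 [HU1 [HV1 [Hu1 [Hv1 Hbox1]]]]]].
    destruct (HW2 p Hp2) as [U2 [V2 [HU2 [HV2 [Hu2 [Hv2 Hbox2]]]]]].
    exists (fun x => U1 x /\ U2 x), (fun y => V1 y /\ V2 y).
    do 4 (split; [auto|]). intros q [? ?] [? ?]. auto.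
  - intros F HF p [W [HFW HWp]]. destruct (HF W HFW p HWp) as [U [V [HU [HV [Hu [Hv Hbox]]]]]].
    exists U, V. do 4 (split; [assumption|]). intros q Hq1 Hq2. exists W. auto.
Qed.

Lemma induced_topology (S X : Type) (op : (X -> Prop) -> Prop) (e : S -> X) :
  is_topology op -> is_topology (induced op e).
Proof.
  intros [Hfull [Hinter Hunion]]. split; [|split].
  - exists (fun _ => True). split; [exact Hfull | tauto].
  - intros W1 W2 [V1 [HV1 E1]] [V2 [HV2 E2]].
    exists (fun x => V1 x /\ V2 x). split; [auto|]. intro s. rewrite E1, E2. tauto.
  - intros F HF.
    exists (fun x => exists V, (op V /\ exists W, F W /\ forall s, W s <-> V (e s)) /\ V x).
    split; [apply Hunion; intros V [HV _]; exact HV|].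
    intro s. split.
    + intros [W [HFW HWs]]. destruct (HF W HFW) as [V [HV E]].
      exists V. split; [eauto | apply E; exact HWs].
    + intros [V [[_ [W [HFW E]]] HVs]]. exists W. split; [exact HFW | apply E; exact HVs].
Qed.

Lemma glue_topology (D M : Type) (opM : (M -> Prop) -> Prop) (pi : D -> M) :
  is_topology opM -> is_topology (glue_open opM pi).
Proof. intro HtopM. apply induced_topology, prod_topology; [apply alpha_topology | exact HtopM]. Qed.

Section Products.
Variables (X Y : Type) (opX : (X -> Prop) -> Prop) (opY : (Y -> Prop) -> Prop).

Lemma nbhd_prod_box a b N1 N2 :
  nbhd opX a N1 -> nbhd opY b N2 ->
  nbhd (prod_open opX opY) (a, b) (fun q => N1 (fst q) /\ N2 (snd q)).
Proof.
  intros [U1 [HU1 [Ha H1]]] [U2 [HU2 [Hb H2]]].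
  exists (fun q => U1 (fst q) /\ U2 (snd q)). split.
  - intros p [Hp1 Hp2]. exists U1, U2. do 4 (split; [assumption|]). auto.
  - simpl. split; [auto | intros q [Hq1 Hq2]; auto].
Qed.

Lemma nbhd_prod_inv p N :
  nbhd (prod_open opX opY) p N ->
  exists N1 N2, nbhd opX (fst p) N1 /\ nbhd opY (snd p) N2 /\
    forall q, N1 (fst q) -> N2 (snd q) -> N q.
Proof.
  intros [W [HW [Hp HN]]]. destruct (HW p Hp) as [U [V [HU [HV [Hu [Hv Hbox]]]]]].
  exists U, V. split; [apply nbhd_open; assumption|].
  split; [apply nbhd_open; assumption|]. auto.
Qed.

Lemma prod_open_of_nbhd (W : X * Y -> Prop) :
  (forall p, W p -> nbhd (prod_open opX opY) p W) -> prod_open opX opY W.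
Proof.
  intros H p Hp. destruct (nbhd_prod_inv (H p Hp)) as [N1 [N2 [HN1 [HN2 Hbox]]]].
  destruct HN1 as [U1 [HU1 [Hu1 H1]]], HN2 as [U2 [HU2 [Hu2 H2]]].
  exists U1, U2. do 4 (split; [assumption|]). auto.
Qed.

Lemma prod_hausdorff_nbhd (q r : X * Y) :
  is_topology opX -> is_topology opY -> hausdorff opX -> hausdorff opY -> q <> r ->
  exists N, nbhd (prod_open opX opY) q N /\ ~ N r.
Proof.
  intros HtX HtY HhX HhY Hqr. destruct q as [a b], r as [a' b'].
  destruct (classic (a = a')) as [<-|Ha].
  - assert (Hb : b <> b') by (intros <-; apply Hqr; reflexivity).
    destruct (hausdorff_nbhd HhY Hb) as [N [HN HNb]].
    exists (fun q => True /\ N (snd q)). split; [exact (nbhd_prod_box (nbhd_full HtX a) HN)|].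
    intros [_ HN']. exact (HNb HN').
  - destruct (hausdorff_nbhd HhX Ha) as [N [HN HNa]].
    exists (fun q => N (fst q) /\ True). split; [exact (nbhd_prod_box HN (nbhd_full HtY b))|].
    intros [HN' _]. exact (HNa HN').
Qed.

End Products.

Lemma finite_sub (X : Type) (A B : X -> Prop) :
  (forall x, A x -> B x) -> finite_set B -> finite_set A.
Proof. intros Hsub [l Hl]. exists l. auto. Qed.

Lemma finite_union (X : Type) (A B : X -> Prop) :
  finite_set A -> finite_set B -> finite_set (fun x => A x \/ B x).
Proof.
  intros [l1 H1] [l2 H2]. exists (l1 ++ l2). intros x [Hx|Hx]; apply in_or_app; auto.
Qed.

Lemma finite_union_list (I X : Type) (A : I -> X -> Prop) (l : list I) :
  (forall i, In i l -> finite_set (A i)) -> finite_set (fun x => exists i, In i l /\ A i x).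
Proof.
  induction l as [|i l IH]; intros Hl.
  - exists nil. intros x [i [[] _]].
  - destruct (finite_union (Hl i (or_introl eq_refl)) (IH (fun j Hj => Hl j (or_intror Hj))))
      as [l' Hl'].
    exists l'. intros x [j [[<-|Hj] Hx]]; apply Hl'; [left | right; exists j]; auto.
Qed.

Section Glue.
Variables (D M : Type) (mD : D -> D -> D) (mM : M -> M -> M)
  (opM : (M -> Prop) -> Prop) (pi : D -> M).
Hypothesis HtopM : is_topology opM.
Hypothesis Hhom : homomorphism mD mM pi.

Local Notation opS := (glue_open opM pi).
Local Notation mS := (glue_mul mD mM pi).

Definition glue_proj (s : D + M) : M :=
  match s with inl x => pi x | inr m => m end.

(* The basic neighbourhoods of a point of M inside S: a neighbourhood V in M
   together with the points of D over V, except finitely many. *)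
Definition glue_ball (V : M -> Prop) (F : list D) (s : D + M) : Prop :=
  match s with inl y => ~ In y F /\ V (pi y) | inr m => V m end.

Definition glue_lift (s : D + M) (V : M -> Prop) (F : list D) : D + M -> Prop :=
  match s with inl x => fun s' => s' = inl x | inr _ => glue_ball V F end.

Definition glue_fibre (c : D) (p : (D + M) * (D + M)) : Prop :=
  exists x y, p = (inl x, inl y) /\ mD x y = c.

Lemma glue_proj_mul s t : glue_proj (mS s t) = mM (glue_proj s) (glue_proj t).
Proof. destruct s, t; simpl; try reflexivity. apply Hhom. Qed.

Lemma glue_mul_inl s t c : mS s t = inl c <-> glue_fibre c (s, t).
Proof.
  split.
  - destruct s as [x|], t as [y|]; simpl; intro E; inversion E. exists x, y. auto.
  - intros [x [y [E <-]]]. inversion E. reflexivity.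
Qed.

Lemma glue_open_of_box (U : option D -> Prop) (V : M -> Prop) (W : D + M -> Prop) :
  alpha_open U -> opM V ->
  (forall s, W s <-> U (fst (glue_emb pi s)) /\ V (snd (glue_emb pi s))) -> opS W.
Proof.
  intros HU HV HW. exists (fun p => U (fst p) /\ V (snd p)). split; [|exact HW].
  intros p [Hu Hv]. exists U, V. do 4 (split; [assumption|]). auto.
Qed.

Lemma nbhd_glue_lift s V F : nbhd opM (glue_proj s) V -> nbhd opS s (glue_lift s V F).
Proof.
  destruct HtopM as [Hfull _].
  destruct s as [x|m]; simpl; intro HV.
  - apply nbhd_open; [|reflexivity].
    apply (glue_open_of_box (U := fun o => o = Some x) (V := fun _ => True)); [discriminate | exact Hfull|].
    intros [y|m]; simpl; split; try intuition congruence.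
  - destruct HV as [O [HO [Hm HOV]]].
    exists (glue_ball O F). split; [|split; [exact Hm|]].
    + apply (glue_open_of_box
        (U := fun o => match o with None => True | Some y => ~ In y F end) (V := O)); [|exact HO|].
      * intros _. exists F. intros y Hy. apply NNPP. exact Hy.
      * intros [y|m']; simpl; tauto.
    + intros [y|m']; simpl; [intros [? ?]|]; auto.
Qed.

Lemma glue_lift_inv s U : nbhd opS s U ->
  exists V F, nbhd opM (glue_proj s) V /\ forall s', glue_lift s V F s' -> U s'.
Proof.
  intros [O [[W [HW EO]] [Hs HOU]]].
  destruct s as [x|m]; simpl.
  - exists (fun _ => True), nil. split; [apply nbhd_full; exact HtopM|].
    intros s' ->. apply HOU. exact Hs.
  - destruct (HW (None, m)) as [A [V [HA [HV [HAn [Hm Hbox]]]]]]; [exact (proj1 (EO (inr m)) Hs)|].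
    destruct (HA HAn) as [F HF].
    exists V, F. split; [apply nbhd_open; assumption|].
    intros [y|m'] Hs'; apply HOU, EO, Hbox; simpl in *; try tauto.
    apply NNPP. intro HAy. apply (proj1 Hs'), HF, HAy.
Qed.

Lemma glue_lift_inl s V F x :
  V (glue_proj s) -> glue_lift s V F (inl x) -> V (pi x) /\ (In x F -> s = inl x).
Proof.
  destruct s as [x'|m]; simpl.
  - intros HV E. inversion E. subst. auto.
  - intros _ [HxF HVx]. split; [exact HVx | intro Hx; contradiction].
Qed.

Lemma nbhd_glue_proj s V : nbhd opM (glue_proj s) V -> nbhd opS s (fun s' => V (glue_proj s')).
Proof.
  intro HV. apply (nbhd_mono (nbhd_glue_lift nil HV)).
  intros [y|m] Hs'; [destruct (glue_lift_inl (nbhd_point HV) Hs'); assumption|].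
  destruct s; simpl in Hs'; [discriminate | exact Hs'].
Qed.

(* (1) implies (2): D_c is the preimage of the closed point c. *)
Lemma glue_fibre_closed_of_continuous c :
  continuous (prod_open opS opS) opS (fun p => mS (fst p) (snd p)) ->
  closed (prod_open opS opS) (glue_fibre c).
Proof.
  intro Hcont. apply prod_open_of_nbhd. intros [s t] Hst.
  assert (Hc : opS (fun s' => s' <> inl c)).
  { apply (glue_open_of_box (U := fun o => o <> Some c) (V := fun _ => True)).
    - intros _. exists (c :: nil). intros x Hx. left. apply NNPP. intro Hne.
      apply Hx. congruence.
    - destruct HtopM as [Hfull _]. exact Hfull.
    - intros [y|m]; simpl; split; intuition congruence. }
  assert (Hne : mS s t <> inl c) by (rewrite glue_mul_inl; exact Hst).
  apply (nbhd_mono (nbhd_continuous (x := (s, t)) Hcont (nbhd_open Hc Hne))).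
  intros [s' t'] Hne' Hf. apply Hne'. apply glue_mul_inl. exact Hf.
Qed.

Lemma glue_mul_ball V F s t :
  (forall c, In c F -> ~ glue_fibre c (s, t)) -> V (mM (glue_proj s) (glue_proj t)) ->
  glue_ball V F (mS s t).
Proof.
  intros Havoid HV. rewrite <- glue_proj_mul in HV.
  destruct s as [x|a], t as [y|b]; simpl in *; try exact HV.
  split; [|exact HV]. intro Hin. apply (Havoid _ Hin). exists x, y. auto.
Qed.

Hypothesis HcontM : continuous (prod_open opM opM) opM (fun p => mM (fst p) (snd p)).

(* (2) implies (1): near a pair whose product m lies in M, continuity of M
   controls the image in M, and closedness of the finitely many D_c with c
   excluded from the ball around m keeps the product off those c. *)
Lemma glue_mul_continuous :
  (forall c, closed (prod_open opS opS) (glue_fibre c)) ->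
  continuous (prod_open opS opS) opS (fun p => mS (fst p) (snd p)).
Proof.
  intros Hclosed W HW. apply prod_open_of_nbhd. intros [s t] Hst. simpl in Hst.
  assert (HtopSS := prod_topology (glue_topology pi HtopM) (glue_topology pi HtopM)).
  destruct (mS s t) as [z|m] eqn:E.
  - (* both factors are isolated points of D *)
    destruct (proj1 (glue_mul_inl s t z) E) as [x [y [Est _]]]. inversion Est; subst s t.
    apply (nbhd_mono (nbhd_prod_box (nbhd_glue_lift (s := inl x) nil (nbhd_full HtopM (pi x)))
                                    (nbhd_glue_lift (s := inl y) nil (nbhd_full HtopM (pi y))))).
    intros [s' t'] [Hs Ht]; simpl in Hs, Ht; subst.
    change (W (mS (inl x) (inl y))). rewrite E. exact Hst.
  -
    destruct (glue_lift_inv (s := inr m) (nbhd_open HW Hst)) as [V [F [HV Hball]]].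
    assert (Hm : m = mM (glue_proj s) (glue_proj t)) by (rewrite <- glue_proj_mul, E; reflexivity).
    subst m. simpl in HV.
    assert (Hnear : nbhd (prod_open opS opS) (s, t)
                      (fun q => V (mM (glue_proj (fst q)) (glue_proj (snd q))))).
    { destruct (nbhd_prod_inv (nbhd_continuous (x := (glue_proj s, glue_proj t)) HcontM HV))
        as [N1 [N2 [HN1 [HN2 Hbox]]]].
      apply (nbhd_mono (nbhd_prod_box (nbhd_glue_proj HN1) (nbhd_glue_proj HN2))).
      intros q [H1 H2]. exact (Hbox (glue_proj (fst q), glue_proj (snd q)) H1 H2). }
    assert (Havoid : nbhd (prod_open opS opS) (s, t)
                       (fun q => forall c, In c F -> ~ glue_fibre c q)).
    { destruct (@nbhd_list_choice _ _ HtopSS D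
                  (fun c N => forall q, N q -> ~ glue_fibre c q) F (s, t)) as [N [HN HP]].
      - intros c N N' HN Hsub q Hq. apply HN, Hsub, Hq.
      - intros c _. exists (fun q => ~ glue_fibre c q). split; [|auto].
        apply nbhd_of_closed; [apply Hclosed|]. rewrite <- glue_mul_inl, E. discriminate.
      - apply (nbhd_mono HN). intros q Hq c Hc. exact (HP c Hc q Hq). }
    apply (nbhd_mono (nbhd_inter HtopSS Havoid Hnear)).
    intros [s' t'] [Ha Hn]. exact (Hball _ (glue_mul_ball Ha Hn)).
Qed.

Definition fibre_image (c : D) (q : M * M) : Prop :=
  exists x y, mD x y = c /\ q = (pi x, pi y).

Definition locally_finite_fibre (c : D) (q : M * M) : Prop :=
  exists N, nbhd (prod_open opM opM) q N /\
    finite_set (fun p : D * D => mD (fst p) (snd p) = c /\ N (pi (fst p), pi (snd p))).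

Definition no_accumulation (c : D) (q : M * M) : Prop :=
  exists N, nbhd (prod_open opM opM) q N /\ forall r, fibre_image c r -> N r -> r = q.

Lemma glue_fibre_separation c s t :
  closed (prod_open opS opS) (glue_fibre c) -> ~ glue_fibre c (s, t) ->
  exists V1 F1 V2 F2, nbhd opM (glue_proj s) V1 /\ nbhd opM (glue_proj t) V2 /\
    forall x y, mD x y = c -> glue_lift s V1 F1 (inl x) -> glue_lift t V2 F2 (inl y) -> False.
Proof.
  intros Hclosed Hst.
  destruct (nbhd_prod_inv (nbhd_of_closed Hclosed Hst)) as [N1 [N2 [HN1 [HN2 Hbox]]]].
  destruct (glue_lift_inv HN1) as [V1 [F1 [HV1 H1]]].
  destruct (glue_lift_inv HN2) as [V2 [F2 [HV2 H2]]].
  exists V1, F1, V2, F2. split; [exact HV1|]. split; [exact HV2|].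
  intros x y Hxy Hx Hy. apply (Hbox (inl x, inl y) (H1 _ Hx) (H2 _ Hy)). exists x, y. auto.
Qed.

Lemma glue_fibre_row c x b :
  closed (prod_open opS opS) (glue_fibre c) ->
  exists W, nbhd opM b W /\
    finite_set (fun p : D * D => fst p = x /\ mD (fst p) (snd p) = c /\ W (pi (snd p))).
Proof.
  intro Hclosed.
  destruct (glue_fibre_separation (s := inl x) (t := inr b) Hclosed)
    as [V1 [F1 [V2 [F2 [_ [HV2 Hsep]]]]]]; [intros [x' [y [E _]]]; inversion E|].
  exists V2. split; [exact HV2|]. exists (map (pair x) F2).
  intros [x' y] [Ex [Hc HW]]; simpl in *. subst x'.
  apply in_map. apply NNPP. intro Hy. exact (Hsep x y Hc eq_refl (conj Hy HW)).
Qed.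

Lemma glue_fibre_col c a y :
  closed (prod_open opS opS) (glue_fibre c) ->
  exists W, nbhd opM a W /\
    finite_set (fun p : D * D => snd p = y /\ mD (fst p) (snd p) = c /\ W (pi (fst p))).
Proof.
  intro Hclosed.
  destruct (glue_fibre_separation (s := inr a) (t := inl y) Hclosed)
    as [V1 [F1 [V2 [F2 [HV1 [_ Hsep]]]]]]; [intros [x [y' [E _]]]; inversion E|].
  exists V1. split; [exact HV1|]. exists (map (fun x => (x, y)) F1).
  intros [x y'] [Ey [Hc HW]]; simpl in *. subst y'.
  apply (in_map (fun x => (x, y))). apply NNPP. intro Hx. exact (Hsep x y Hc (conj Hx HW) eq_refl).
Qed.

(* (2) implies local finiteness: near (a,b), a pair of D_c has its left factor
   in a finite set F1 or its right factor in a finite set F2, and each of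
   these finitely many rows and columns is itself locally finite. *)
Lemma glue_fibre_closed_lf c q :
  closed (prod_open opS opS) (glue_fibre c) -> locally_finite_fibre c q.
Proof.
  intro Hclosed. destruct q as [a b].
  destruct (glue_fibre_separation (s := inr a) (t := inr b) Hclosed)
    as [V1 [F1 [V2 [F2 [HV1 [HV2 Hsep]]]]]]; [intros [x [y [E _]]]; inversion E|].
  destruct (@nbhd_list_choice _ _ HtopM D (fun x W => finite_set (fun p : D * D =>
              fst p = x /\ mD (fst p) (snd p) = c /\ W (pi (snd p)))) F1 b) as [W2 [HW2 Hrows]].
  { intros x N N' HN Hsub. eapply finite_sub; [|exact HN]. intros p [? [? ?]]; auto. }
  { intros x _. apply glue_fibre_row. exact Hclosed. }
  destruct (@nbhd_list_choice _ _ HtopM D (fun y W => finite_set (fun p : D * D =>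
              snd p = y /\ mD (fst p) (snd p) = c /\ W (pi (fst p)))) F2 a) as [W1 [HW1 Hcols]].
  { intros y N N' HN Hsub. eapply finite_sub; [|exact HN]. intros p [? [? ?]]; auto. }
  { intros y _. apply glue_fibre_col. exact Hclosed. }
  cbv beta in Hrows, Hcols.
  exists (fun r => (V1 (fst r) /\ W1 (fst r)) /\ (V2 (snd r) /\ W2 (snd r))). split.
  - exact (nbhd_prod_box (nbhd_inter HtopM HV1 HW1) (nbhd_inter HtopM HV2 HW2)).
  - eapply finite_sub; [|exact (finite_union (finite_union_list Hrows) (finite_union_list Hcols))].
    intros [x y] [Hc [[Hx1 Hx2] [Hy1 Hy2]]]; simpl in *.
    destruct (classic (In x F1)) as [HxF|HxF]; [left; exists x; simpl; auto|].
    destruct (classic (In y F2)) as [HyF|HyF]; [right; exists y; simpl; auto|].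
    exfalso. exact (Hsep x y Hc (conj HxF Hx1) (conj HyF Hy1)).
Qed.

(* Local finiteness implies (2): near a pair outside D_c, the finitely many
   nearby pairs of D_c are excluded from the basic neighbourhoods. *)
Lemma lf_glue_fibre_closed c :
  (forall q, locally_finite_fibre c q) -> closed (prod_open opS opS) (glue_fibre c).
Proof.
  intro Hlf. apply prod_open_of_nbhd. intros [s t] Hst.
  destruct (Hlf (glue_proj s, glue_proj t)) as [N [HN [L HL]]].
  destruct (nbhd_prod_inv HN) as [N1 [N2 [HN1 [HN2 Hbox]]]]. simpl in HN1, HN2.
  apply (nbhd_mono (nbhd_prod_box (nbhd_glue_lift (map fst L) HN1) (nbhd_glue_lift (map snd L) HN2))).
  intros [s' t'] [Hs' Ht'] [x [y [E Hc]]]. simpl in Hs', Ht'. inversion E; subst s' t'.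
  destruct (glue_lift_inl (nbhd_point HN1) Hs') as [Hx Hxs].
  destruct (glue_lift_inl (nbhd_point HN2) Ht') as [Hy Hyt].
  assert (Hxy : In (x, y) L) by (apply HL; split; [exact Hc | exact (Hbox (pi x, pi y) Hx Hy)]).
  apply Hst. exists x, y. rewrite (Hxs (in_map fst L _ Hxy)), (Hyt (in_map snd L _ Hxy)). auto.
Qed.

Lemma lf_no_accumulation c q :
  hausdorff opM -> locally_finite_fibre c q -> no_accumulation c q.
Proof.
  intros Hh [N [HN [L HL]]].
  assert (HtopMM := prod_topology HtopM HtopM).
  destruct (@nbhd_list_choice _ _ HtopMM (D * D) (fun p N' =>
              (pi (fst p), pi (snd p)) <> q -> ~ N' (pi (fst p), pi (snd p))) L q)
    as [N' [HN' Hsep]].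
  { intros p A A' HA Hsub Hne HA'. exact (HA Hne (Hsub _ HA')). }
  { intros p _. destruct (classic ((pi (fst p), pi (snd p)) = q)) as [Eq|Ne].
    - exists (fun _ => True). split; [apply nbhd_full; exact HtopMM | intro Hne; contradiction].
    - destruct (prod_hausdorff_nbhd HtopM HtopM Hh Hh (not_eq_sym Ne)) as [N0 [HN0 HN0r]].
      exists N0. split; [exact HN0 | auto]. }
  exists (fun r => N r /\ N' r). split; [apply nbhd_inter; assumption|].
  intros r [x [y [Hc ->]]] [Hr Hr']. apply NNPP. intro Hne.
  exact (Hsep (x, y) (HL (x, y) (conj Hc Hr)) Hne Hr').
Qed.

Lemma no_accumulation_lf c q :
  finitely_resolvable mD pi -> no_accumulation c q -> locally_finite_fibre c q.
Proof.
  intros Hfr [N [HN Hiso]]. exists N. split; [exact HN|]. destruct q as [a b].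
  apply (finite_sub (B := fun p : D * D =>
           pi (fst p) = a /\ pi (snd p) = b /\ mD (fst p) (snd p) = c)); [|apply Hfr].
  intros [x y] [Hc Hn]. simpl in *.
  assert (E : (pi x, pi y) = (a, b)) by (apply Hiso; [exists x, y; auto | exact Hn]).
  inversion E. auto.
Qed.

Lemma no_accumulation_closed_discrete c :
  (forall q, no_accumulation c q) <->
  closed (prod_open opM opM) (fibre_image c) /\ discrete_in (prod_open opM opM) (fibre_image c).
Proof.
  split.
  - intros Hna. split.
    + apply prod_open_of_nbhd. intros q Hq. destruct (Hna q) as [N [HN Hiso]].
      apply (nbhd_mono HN). intros r Hr HAr. apply Hq. rewrite <- (Hiso r HAr Hr). exact HAr.
    + intros q Hq. destruct (Hna q) as [N [[U [HU [HUq HUN]]] Hiso]].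
      exists U. split; [exact HU|]. split; [exact HUq|].
      intros r HAr HUr. exact (Hiso r HAr (HUN r HUr)).
  - intros [Hclosed Hdisc] q. destruct (classic (fibre_image c q)) as [Hq|Hq].
    + destruct (Hdisc q Hq) as [U [HU [HUq Hiso]]].
      exists U. split; [apply nbhd_open; assumption | exact Hiso].
    + exists (fun r => ~ fibre_image c r).
      split; [apply nbhd_of_closed; assumption | intros r HAr Hr; contradiction].
Qed.

(* (4) rules out accumulation points: if ab = pi(c) then a and b lie in the
   discrete set pi(D) by the ideal property; otherwise, by continuity, the
   products near (a,b) stay away from pi(c). *)
Lemma ideal_no_accumulation c q :
  hausdorff opM -> discrete_in opM (fun m => exists x, pi x = m) ->
  two_sided_ideal mM (fun m => ~ exists x, pi x = m) -> no_accumulation c q.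
Proof.
  intros Hh Hdisc Hideal. destruct q as [a b].
  destruct (classic (mM a b = pi c)) as [Hab|Hab].
  - assert (Ha : exists x, pi x = a).
    { apply NNPP. intro Hna. apply (proj1 (Hideal a b Hna)). exists c. auto. }
    assert (Hb : exists y, pi y = b).
    { apply NNPP. intro Hnb. apply (proj2 (Hideal b a Hnb)). exists c. auto. }
    destruct (Hdisc a Ha) as [U1 [HU1 [Ha1 Hiso1]]], (Hdisc b Hb) as [U2 [HU2 [Hb2 Hiso2]]].
    exists (fun r => U1 (fst r) /\ U2 (snd r)).
    split; [exact (nbhd_prod_box (nbhd_open HU1 Ha1) (nbhd_open HU2 Hb2))|].
    intros r [x [y [_ ->]]] [Hx Hy]. simpl in Hx, Hy.
    rewrite (Hiso1 (pi x) (ex_intro _ x eq_refl) Hx), (Hiso2 (pi y) (ex_intro _ y eq_refl) Hy).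
    reflexivity.
  - destruct (hausdorff_nbhd Hh Hab) as [N [HN HNc]].
    exists (fun r => N (mM (fst r) (snd r))).
    split; [exact (nbhd_continuous (x := (a, b)) HcontM HN)|].
    intros r [x [y [Hc ->]]] Hr. exfalso. apply HNc. simpl in Hr. rewrite <- Hhom, Hc in Hr. exact Hr.
Qed.

End Glue.

Theorem theorem3p2 (D M : Type) (mD : D -> D -> D) (mM : M -> M -> M)
  (opM : (M -> Prop) -> Prop) (pi : D -> M)
  (HassocD : associative mD) (HassocM : associative mM)
  (HtopM : is_topology opM) (HhausM : hausdorff opM)
  (HcontM : continuous (prod_open opM opM) opM (fun p => mM (fst p) (snd p)))
  (Hhom : homomorphism mD mM pi) :
  let opS := glue_open opM pi in
  let mS := glue_mul mD mM pi in
  let P1 := continuous (prod_open opS opS) opS (fun p => mS (fst p) (snd p)) in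
  let P2 := forall c : D,
      closed (prod_open opS opS)
        (fun p : (D + M) * (D + M) =>
           exists x y, p = (inl x, inl y) /\ mD x y = c) in
  let P3 := forall c : D,
      let A := fun q : M * M =>
                 exists x y, mD x y = c /\ q = (pi x, pi y) in
      closed (prod_open opM opM) A /\ discrete_in (prod_open opM opM) A in
  let P4 := discrete_in opM (fun m => exists x, pi x = m) /\
            two_sided_ideal mM (fun m => ~ exists x, pi x = m) in
  (P1 <-> P2) /\
  (finitely_resolvable mD pi -> (P1 <-> P3) /\ (P4 -> P1)).
Proof.
  intros opS mS P1 P2 P3 P4.
  assert (H12 : P1 <-> P2).
  { split; [intros H c; apply (glue_fibre_closed_of_continuous (mM := mM)) | apply glue_mul_continuous];
      assumption. }
  assert (H2lf : P2 <-> forall c q, locally_finite_fibre mD opM pi c q).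
  { split; intros H c; [intro q; apply glue_fibre_closed_lf | apply lf_glue_fibre_closed];
      first [exact HtopM | exact (H c)]. }
  assert (H3na : P3 <-> forall c q, no_accumulation mD opM pi c q).
  { split; intros H c; apply no_accumulation_closed_discrete; exact (H c). }
  split; [exact H12|]. intros Hfr.
  assert (Hlfna : (forall c q, locally_finite_fibre mD opM pi c q) <->
                  (forall c q, no_accumulation mD opM pi c q)).
  { split; intros H c q; [apply lf_no_accumulation | apply no_accumulation_lf]; auto. }
  split; [tauto|]. intros [Hdisc Hideal].
  apply H12, H2lf, Hlfna. intros c q. apply (ideal_no_accumulation (mM := mM)); assumption.
Qed.
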